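(* For every Hamming graph $H(d,q)$, the VC-dimension of the edge relation on $H(d,q)$ is at most $3$.
   Context: For $d,q\in\mathbb N$ and a set $S$ with $|S|=q$, the Hamming graph $H(d,q)$ has vertex set $S^d$, two vertices adjacent iff they agree in all but exactly one coordinate. The VC-dimension of the edge relation on a graph $G$ is the largest size of a set $A\subseteq V(G)$ such that $\{A\cap N(v)\mid v\in V(G)\}$ equals the power set of $A$, where $N(v)$ is the set of vertices adjacent to $v$. *)

From mathcomp Require Import all_boot.
Set Implicit Arguments. Unset Strict Implicit. Unset Printing Implicit Defensive.

(* Vertices of the Hamming graph H(d,q) over alphabet S (|S| = q): S^d. *)
Definition hvertex (d : nat) (S : finType) := {ffun 'I_d -> S}.

Definition hamming_adj (d : nat) (S : finType) (u v : hvertex d S) : bool :=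
  #|[set i : 'I_d | u i != v i]| == 1.

Definition hnbhd (d : nat) (S : finType) (v : hvertex d S) : {set hvertex d S} :=
  [set u | hamming_adj u v].

Definition edge_shattered (d : nat) (S : finType) (A : {set hvertex d S}) : Prop :=
  forall B : {set hvertex d S}, B \subset A ->
    exists v : hvertex d S, A :&: hnbhd v = B.

From mathcomp Require Import all_boot.
Set Implicit Arguments. Unset Strict Implicit. Unset Printing Implicit Defensive.

(* Two distinct vertices x, y of a shattered set A have at least 2^(|A|-2)
   common neighbours, one for each trace containing x and y.  Two non-adjacent
   vertices of H(d,q) have at most two common neighbours (switch one of the
   two coordinates where they differ), so any two vertices of a shattered set
   with four elements are adjacent.  Then A and every common neighbour w of a
   fixed adjacent pair a, b lie on the line through a and b, on which distinct
   points are adjacent; hence the trace of w on A is A minus w, which must be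
   {a, b}, forcing |A| <= 3. *)

Section Shattering.
Variables (T : finType) (N : T -> {set T}) (A : {set T}).
Hypothesis shA : forall B : {set T}, B \subset A -> exists v, A :&: N v = B.

Lemma shattered_common_nbhd_card (C : {set T}) : C \subset A ->
  2 ^ #|A :\: C| <= #|[set v | C \subset N v]|.
Proof.
move=> CA; rewrite -card_powerset.
apply: leq_trans (leq_imset_card (fun v => A :&: N v :\: C) _).
apply/subset_leq_card/subsetP => B; rewrite powersetE subsetD => /andP[BA BC].
have /shA[v AvE] : B :|: C \subset A by rewrite subUset BA CA.
apply/imsetP; exists v.
  by rewrite inE (subset_trans _ (subsetIr A _)) // AvE subsetUr.
by rewrite AvE setDUl setDv setU0; apply/esym/setDidPl.
Qed.

End Shattering.

Section HammingGeometry.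
Variables (d : nat) (S : finType).
Implicit Types (u v w x y : hvertex d S) (i j : 'I_d).

Definition hdiff u v : {set 'I_d} := [set k | u k != v k].

Definition hline u i : {set hvertex d S} := [set v | hdiff u v \subset [set i]].

Definition hswitch x y i : hvertex d S := [ffun k => if k == i then y k else x k].

Lemma hamming_adjP u v : reflect (exists i, hdiff u v = [set i]) (hamming_adj u v).
Proof. exact: cards1P. Qed.

Lemma hdiff_sym u v : hdiff u v = hdiff v u.
Proof. by apply/setP => k; rewrite !inE eq_sym. Qed.

Lemma hdiff_eq0 u v : (hdiff u v == set0) = (u == v).
Proof.
apply/eqP/eqP => [uv|->]; last by apply/setP => k; rewrite !inE eqxx.
by apply/ffunP => k; move/setP/(_ k): uv; rewrite !inE => /negbFE/eqP.
Qed.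

Lemma hdiff_trans u v w : hdiff u w \subset hdiff u v :|: hdiff v w.
Proof.
by apply/subsetP => k; rewrite !inE; case: (eqVneq (u k) (v k)) => [->|].
Qed.

Lemma hdiff1_coordE u v i : hdiff u v = [set i] -> forall k, (u k == v k) = (k != i).
Proof. by move/setP=> uvi k; move: (uvi k); rewrite !inE => <-; rewrite negbK. Qed.

Lemma hline_id u i : u \in hline u i.
Proof.
have /eqP uu0 : hdiff u u == set0 by rewrite hdiff_eq0.
by rewrite inE uu0 sub0set.
Qed.

Lemma hline_adj u i v w : v \in hline u i -> w \in hline u i ->
  hamming_adj v w = (v != w).
Proof.
rewrite !inE => uv uw.
have vw : hdiff v w \subset [set i].
  by apply: subset_trans (hdiff_trans v u w) _; rewrite hdiff_sym subUset uv uw.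
have vw_le1 : #|hdiff v w| <= 1 by rewrite -(cards1 i) subset_leq_card.
by rewrite -hdiff_eq0 -card_gt0 /hamming_adj eqn_leq vw_le1.
Qed.

Lemma hline_common_nbhd a b w i : hdiff a b = [set i] ->
  hamming_adj a w -> hamming_adj b w -> w \in hline a i.
Proof.
move=> abi /hamming_adjP[j awj] /hamming_adjP[j' bwj'].
have ij : i \in hdiff a w :|: hdiff w b.
  by apply: (subsetP (hdiff_trans a w b)); rewrite abi set11.
have ji : j \in hdiff a b :|: hdiff b w.
  by apply: (subsetP (hdiff_trans a b w)); rewrite awj set11.
rewrite inE awj sub1set inE.
move: ij ji; rewrite (hdiff_sym w b) abi awj bwj' !inE.
by case/orP=> /eqP->; rewrite ?eqxx ?orbb.
Qed.

Lemma hdiff_common_nbhd_card x y w : hamming_adj x w -> hamming_adj y w ->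
  #|hdiff x y| <= 2.
Proof.
move=> /hamming_adjP[j xwj] /hamming_adjP[j' ywj'].
apply: leq_trans (subset_leq_card (hdiff_trans x w y)) _.
by rewrite (hdiff_sym w y) xwj ywj' cards2 ltnS leq_b1.
Qed.

Lemma nonadj_common_nbhd_switch x y w : x != y -> ~~ hamming_adj x y ->
  hamming_adj x w -> hamming_adj y w -> exists2 j, j \in hdiff x y & w = hswitch x y j.
Proof.
move=> xy nxy xw yw; have /hamming_adjP[j xwj] := xw; have /hamming_adjP[j' ywj'] := yw.
have jj' : j != j'.
  apply: contra nxy => /eqP jj'; rewrite (hline_adj (hline_id x j)) //.
  rewrite inE; apply: subset_trans (hdiff_trans x w y) _.
  by rewrite (hdiff_sym w y) xwj ywj' jj' setUid.
have wyj : w j = y j by apply/eqP; rewrite eq_sym (hdiff1_coordE ywj').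
exists j.
  by rewrite inE -wyj; move: (hdiff1_coordE xwj j); rewrite eqxx => ->.
apply/ffunP => k; rewrite ffunE; case: eqP => [->//|/eqP kj].
by apply/eqP; rewrite eq_sym (hdiff1_coordE xwj) kj.
Qed.

Lemma card_common_nbhd_nonadj x y : x != y -> ~~ hamming_adj x y ->
  #|[set w | [set x; y] \subset hnbhd w]| <= 2.
Proof.
move=> xy nxy; set W := [set w | _].
have WE w : (w \in W) = hamming_adj x w && hamming_adj y w.
  by rewrite !inE subUset !sub1set !inE.
have [->|[w0]] := set_0Vmem W; first by rewrite cards0.
rewrite WE => /andP[xw0 yw0].
have W_sub : W \subset hswitch x y @: hdiff x y.
  apply/subsetP => w; rewrite WE => /andP[xw yw].
  by have [j ? ->] := nonadj_common_nbhd_switch xy nxy xw yw; apply: imset_f.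
apply: leq_trans (subset_leq_card W_sub) _.
exact: leq_trans (leq_imset_card _ _) (hdiff_common_nbhd_card xw0 yw0).
Qed.

End HammingGeometry.

Section ShatteredHamming.
Variables (d : nat) (S : finType) (A : {set hvertex d S}).
Hypothesis shA : edge_shattered A.

Lemma shattered_clique : 3 < #|A| ->
  {in A &, forall x y, x != y -> hamming_adj x y}.
Proof.
move=> A_gt3 x y xA yA xy; apply: contraTT A_gt3 => nxy; rewrite -leqNgt.
have xyA : [set x; y] \subset A by rewrite subUset !sub1set xA yA.
have := leq_trans (shattered_common_nbhd_card shA xyA) (card_common_nbhd_nonadj xy nxy).
rewrite -{2}(expn1 2) leq_exp2l // -(cardsID [set x; y] A) (setIidPr xyA) cards2 xy.
by rewrite -(leq_add2l 2) => /leq_trans; apply.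
Qed.

Lemma shattered_clique_card : {in A &, forall x y, x != y -> hamming_adj x y} ->
  #|A| <= 3.
Proof.
move=> clA; case: (leqP #|A| 1) => [/leq_trans -> //|/card_gt1P[a [b [aA bA ab]]]].
have /hamming_adjP[i abi] := clA a b aA bA ab.
have A_line : A \subset hline a i.
  apply/subsetP => c cA; case: (eqVneq c a) => [->|ca]; first exact: hline_id.
  case: (eqVneq c b) => [->|cb]; first by rewrite inE abi.
  by apply: hline_common_nbhd abi _ _; apply: clA; rewrite // eq_sym.
have /shA[w AwE] : [set a; b] \subset A by rewrite subUset !sub1set aA bA.
have w_line : w \in hline a i.
  have : [set a; b] \subset hnbhd w by rewrite -AwE subsetIr.
  rewrite subUset !sub1set => /andP[aw bw].
  by apply: hline_common_nbhd abi _ _; [move: aw | move: bw]; rewrite inE.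
have AwD1 : A :\ w = [set a; b].
  rewrite -AwE; apply/setP => c; rewrite !inE andbC; case cA: (c \in A) => //=.
  by rewrite (hline_adj (subsetP A_line c cA) w_line).
by rewrite (cardsD1 w A) AwD1 cards2 ab; case: (w \in A).
Qed.

End ShatteredHamming.

Theorem mainTheorem16 (d : nat) (S : finType) (A : {set hvertex d S}) :
  edge_shattered A -> #|A| <= 3.
Proof.
move=> shA; case: (leqP #|A| 3) => // A_gt3.
by have := shattered_clique_card shA (shattered_clique shA A_gt3); rewrite leqNgt A_gt3.
Qed.
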